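(* Suppose $H$ satisfies (B1) and (B2), and for $\alpha>0$ let $v^\alpha\in C(\mathbb{T}^d)\otimes\mathcal{B}(I)$ be the viscosity solution of (DP) (the one constructed by Perron's method, which satisfies $-M/\alpha\le v^\alpha\le M/\alpha$ with $M:=\sup_{\mathbb{T}^d\times I}|H(x,0,\xi)|$). Then for each $\alpha>0$ there exists $L_\alpha>0$ such that $|v^\alpha(x,\xi)-v^\alpha(y,\xi)|\le L_\alpha|x-y|$ for all $x,y\in\mathbb{T}^d$, $\xi\in I$.
   Context: $I\subset\mathbb{R}$ finite interval, $|I|=1$; $k$ Borel measurable on $I\times I$ with $0<k_0\le k\le k_1$. $H\in C(\mathbb{T}^d\times\mathbb{R}^d)\otimes\mathcal{B}(I)$ with $H(\cdot,p,\cdot)$ bounded for each $p$. (DP): $\alpha v(x,\xi)+H(x,Dv(x,\xi),\xi)+\int_I k(\xi,\eta)(v(x,\xi)-v(x,\eta))d\eta=0$ in $\mathbb{T}^d\times I$, understood in the viscosity sense (test functions $\phi\in C^1(\mathbb{T}^d)$ touching $v(\cdot,\xi)$ for fixed $\xi$). (B1): $C_1|p|^m-C_2\le H(x,p,\xi)$ for constants $C_1,C_2>0$, $m>1$. (B2): for each $R>0$ a modulus $\omega_R$ with $|H(x,p,\xi)-H(y,p,\xi)|\le\omega_R(|x-y|)$ for $|p|\le R$. $C(\mathbb{T}^d)\otimes\mathcal{B}(I)$: functions continuous in $x$ for each $\xi$ and Borel in $\xi$ for each $x$. *)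

From HB Require Import structures.
From mathcomp Require Import all_boot all_order all_algebra.
From mathcomp Require Import all_classical all_reals all_analysis.
Set Implicit Arguments. Unset Strict Implicit. Unset Printing Implicit Defensive.
Import Order.TTheory GRing.Theory Num.Theory.
Import numFieldNormedType.Exports.
Local Open Scope classical_set_scope.
Local Open Scope ring_scope.

(* Points of R^d are row vectors; functions on T^d = R^d/Z^d are represented
   by Z^d-periodic functions on R^d. *)

Definition enorm (R : realType) (d : nat) (x : 'rV[R]_d) : R :=
  Num.sqrt (\sum_(i < d) x ord0 i ^+ 2).

Definition periodic (R : realType) (d : nat) (T : Type) (f : 'rV[R]_d -> T) :=
  forall (x : 'rV[R]_d) (z : 'rV[int]_d), f (x + map_mx (fun n : int => n%:~R) z) = f x.

Definition grad (R : realType) (d : nat) (phi : 'rV[R]_d -> R) (x : 'rV[R]_d)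
  : 'rV[R]_d := \row_(i < d) ('D_(delta_mx 0 i) phi x).

Definition C1_torus (R : realType) (d : nat) (phi : 'rV[R]_d -> R) :=
  periodic phi /\ (forall x, differentiable phi x) /\ continuous (grad phi).

Definition modulus (R : realType) (w : R -> R) :=
  w 0 = 0 /\ (forall r, 0 <= r -> 0 <= w r) /\
  (forall r s, 0 <= r -> r <= s -> w r <= w s) /\
  (w r @[r --> 0^'+] --> 0).

Definition hamiltonian_class (R : realType) (d : nat) (I : set R)
    (H : 'rV[R]_d -> 'rV[R]_d -> R -> R) :=
  (forall xi, I xi -> continuous (fun xp : 'rV[R]_d * 'rV[R]_d => H xp.1 xp.2 xi)) /\
  (forall x p, measurable_fun I (H x p)) /\
  (forall p xi, periodic (fun x => H x p xi)) /\
  (forall p, exists C : R, forall x xi, I xi -> `|H x p xi| <= C).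

Definition B1 (R : realType) (d : nat) (I : set R)
    (H : 'rV[R]_d -> 'rV[R]_d -> R -> R) :=
  exists C1 C2 m : R, 0 < C1 /\ 0 < C2 /\ 1 < m /\
    forall x p xi, I xi -> C1 * (enorm p `^ m) - C2 <= H x p xi.

Definition B2 (R : realType) (d : nat) (I : set R)
    (H : 'rV[R]_d -> 'rV[R]_d -> R -> R) :=
  forall R0 : R, 0 < R0 -> exists w : R -> R, modulus w /\
    forall x y p xi, I xi -> enorm p <= R0 ->
      `|H x p xi - H y p xi| <= w (enorm (x - y)).

Definition CxB (R : realType) (d : nat) (I : set R) (v : 'rV[R]_d -> R -> R) :=
  (forall xi, I xi -> continuous (fun x => v x xi)) /\
  (forall x, measurable_fun I (v x)) /\
  (forall xi, periodic (fun x => v x xi)).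

Definition coupling (R : realType) (d : nat) (I : set R) (k : R -> R -> R)
    (v : 'rV[R]_d -> R -> R) (x : 'rV[R]_d) (xi : R) : \bar R :=
  (\int[lebesgue_measure]_(eta in I) (k xi eta * (v x xi - v x eta))%:E)%E.

Definition visc_sub (R : realType) (d : nat) (I : set R) (k : R -> R -> R)
    (H : 'rV[R]_d -> 'rV[R]_d -> R -> R) (alpha : R) (v : 'rV[R]_d -> R -> R) :=
  forall (xi : R) (phi : 'rV[R]_d -> R) (x0 : 'rV[R]_d), I xi -> C1_torus phi ->
    (\forall y \near x0, v y xi - phi y <= v x0 xi - phi x0) ->
    ((alpha * v x0 xi + H x0 (grad phi x0) xi)%:E + coupling I k v x0 xi <= 0)%E.

Definition visc_super (R : realType) (d : nat) (I : set R) (k : R -> R -> R)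
    (H : 'rV[R]_d -> 'rV[R]_d -> R -> R) (alpha : R) (v : 'rV[R]_d -> R -> R) :=
  forall (xi : R) (phi : 'rV[R]_d -> R) (x0 : 'rV[R]_d), I xi -> C1_torus phi ->
    (\forall y \near x0, v x0 xi - phi x0 <= v y xi - phi y) ->
    (0 <= (alpha * v x0 xi + H x0 (grad phi x0) xi)%:E + coupling I k v x0 xi)%E.

Definition visc_sol (R : realType) (d : nat) (I : set R) (k : R -> R -> R)
    (H : 'rV[R]_d -> 'rV[R]_d -> R -> R) (alpha : R) (v : 'rV[R]_d -> R -> R) :=
  CxB I v /\ visc_sub I k H alpha v /\ visc_super I k H alpha v.

Definition Msup (R : realType) (d : nat) (I : set R)
    (H : 'rV[R]_d -> 'rV[R]_d -> R -> R) : R :=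
  sup [set r : R | exists x xi, I xi /\ r = `|H x 0 xi|].

From Pilot Require Import Defs.
From HB Require Import structures.
From mathcomp Require Import all_boot all_order all_algebra.
From mathcomp Require Import all_classical all_reals all_analysis.
From mathcomp Require Import ring lra measurable_realfun.
Set Implicit Arguments. Unset Strict Implicit. Unset Printing Implicit Defensive.
Import Order.TTheory GRing.Theory Num.Theory.
Import numFieldNormedType.Exports.
Local Open Scope classical_set_scope.
Local Open Scope ring_scope.

(* The proof separates the nonlocal PDE from a purely local statement.
   1. Gradient bound ([subsol_eikonal]).  At a point where a C^1 test
      function phi touches v(., xi) from above, the subsolution inequality,
      the bound |v| <= M/alpha and the lower bound on the coupling term
      ([coupling_ge]) give H(x0, Dphi(x0), xi) <= C, so by the coercivity
      (B1) |Dphi(x0)| <= K for a constant K independent of xi: each v(., xi)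
      is a viscosity subsolution of |Du| <= K ([visc_sub_eikonal]).
   2. Lipschitz estimate ([eikonal_lipschitz]).  A continuous, periodic,
      bounded viscosity subsolution of |Du| <= K is Lipschitz.  The test
      function is a smoothed periodic cone A sqrt(e^2 + sum_j sin^2(pi(w_j -
      x_j))) with vertex x; for A large the maximum of u - cone is attained
      near x ([cone_max_near]), which yields u(w) <= u(x) + A pi |w - x|.
   The theorem combines the two steps. *)

(* sin^2 is pi-periodic; this makes the test functions Z^d-periodic. *)
Lemma sqr_sin_shift (R : realType) (y : R) (n : int) :
  sin (y + n%:~R * pi) ^+ 2 = sin y ^+ 2.
Proof.
have shiftn (z : R) (m : nat) : sin (z + pi *+ m) ^+ 2 = sin z ^+ 2.
  elim: m => [|m IH]; first by rewrite mulr0n addr0.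
  by rewrite mulrS addrCA addrC sinDpi sqrrN.
case: n => [n|n]; first by rewrite mulr_natl shiftn.
rewrite NegzE mulrNz mulNr mulr_natl.
by rewrite -[in RHS](subrK (pi *+ n.+1) y) shiftn.
Qed.

Lemma norm_sin_le (R : realType) (y : R) : `|sin y| <= `|y|.
Proof.
wlog y0 : y / 0 <= y.
  move=> Hwlog; case: (leP 0 y) => [/Hwlog//|y0].
  by rewrite -normrN -sinN -(normrN y) Hwlog // oppr_ge0 ltW.
have [->|yn0] := eqVneq y 0; first by rewrite sin0 normr0.
have yp : 0 < y by rewrite lt_neqAle eq_sym yn0.
have [c _ sinyE] := @MVT R sin cos 0 y yp (fun x _ => is_derive_sin x)
   (continuous_subspaceT (@continuous_sin R)).
rewrite sin0 !subr0 in sinyE.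
by rewrite sinyE normrM (ger0_norm y0) ler_piMl // cos_max.
Qed.

(* The one-dimensional building block  t |-> sin^2 (pi (t - c)),  a smooth
   1-periodic function vanishing exactly at c + Z, and its derivative. *)
Definition sqsin (R : realType) (c t : R) : R := sin (pi * (t - c)) ^+ 2.
Definition sqsin' (R : realType) (c t : R) : R :=
  2 * sin (pi * (t - c)) * cos (pi * (t - c)) * pi.

Lemma is_derive_sqsin (R : realType) (c t : R) : is_derive t 1 (sqsin c) (sqsin' c t).
Proof.
pose h t : R := pi * (t - c).
have dh : is_derive t 1 h pi.
  have -> : h = pi \*: (fun t : R => t - c) by apply/funext.
  have dshift : is_derive t (1 : R) (fun t : R => t - c) 1.
    by have := is_deriveB (is_derive_id t 1) (@is_derive_cst R R R c t 1); rewrite subr0.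
  by have := is_deriveZ pi dshift; rewrite [X in is_derive _ _ _ X]/GRing.scale /= mulr1.
have dsin : is_derive t 1 (sin \o h) (cos (h t) * pi) by exact: is_derive1_comp.
have -> : sqsin c = (sin \o h) * (sin \o h) by apply/funext => s; rewrite /sqsin /= expr2.
apply: is_derive_eq; rewrite /sqsin' /h /= /GRing.scale /=; ring.
Qed.

Lemma derive_comp_real (R : realType) (V : normedModType R) (f : V -> R)
    (g : R -> R) (w v : V) (g' : R) :
  differentiable f w -> is_derive (f w) 1 g g' ->
  differentiable (g \o f) w /\ 'D_v (g \o f) w = g' * 'D_v f w.
Proof.
move=> df dg.
have dg1 : differentiable g (f w) by apply/derivable1_diffP; exact: ex_derive.
have dgf : differentiable (g \o f) w by exact: differentiable_comp.
split => //.
rewrite deriveE // diff_comp // /= deriv1E ?derive1E; last exact: ex_derive.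
by rewrite derive_val -deriveE // mulrC.
Qed.

Lemma derive_coord (R : realType) d (j : 'I_d) (w v : 'rV[R]_d) :
  'D_v (fun t : 'rV[R]_d => t ord0 j) w = v ord0 j.
Proof.
have := @derive_mx R _ 1 d id w v (@derivable_id _ _ w v).
by rewrite derive_id => /(congr1 (fun M : 'rV[R]_d => M ord0 j)); rewrite mxE.
Qed.

(* [sinsum x w] is a smooth, Z^d-periodic substitute for |w - x|^2 on the
   torus; [cone A e x] = A sqrt(e^2 + sinsum x) is a smoothed cone of slope
   about A pi with vertex at x, the test function of the Lipschitz argument. *)
Definition sinsum (R : realType) d (x w : 'rV[R]_d) : R :=
  \sum_(j < d) sqsin (x ord0 j) (w ord0 j).
Definition cone (R : realType) d (A e : R) (x w : 'rV[R]_d) : R :=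
  A * Num.sqrt (e ^+ 2 + sinsum x w).

Lemma sinsum_ge0 (R : realType) d (x w : 'rV[R]_d) : 0 <= sinsum x w.
Proof. by apply: sumr_ge0 => j _; rewrite /sqsin sqr_ge0. Qed.

Lemma sinsum_periodic (R : realType) d (x : 'rV[R]_d) : Defs.periodic (sinsum x).
Proof.
move=> w z; apply: eq_bigr => j _; rewrite !mxE /sqsin.
have -> : pi * (w ord0 j + (z ord0 j)%:~R - x ord0 j) =
   pi * (w ord0 j - x ord0 j) + (z ord0 j)%:~R * pi by ring.
exact: sqr_sin_shift.
Qed.

Lemma derive_sinsum (R : realType) d (x w v : 'rV[R]_d) :
  differentiable (sinsum x) w /\
  'D_v (sinsum x) w = \sum_(j < d) sqsin' (x ord0 j) (w ord0 j) * v ord0 j.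
Proof.
have term j : differentiable (fun t : 'rV[R]_d => sqsin (x ord0 j) (t ord0 j)) w /\
    'D_v (fun t : 'rV[R]_d => sqsin (x ord0 j) (t ord0 j)) w =
    sqsin' (x ord0 j) (w ord0 j) * v ord0 j.
  have := @derive_comp_real R _ (fun t : 'rV[R]_d => t ord0 j) (sqsin (x ord0 j)) w v _
    (differentiable_coord w ord0 j) (is_derive_sqsin _ _).
  by rewrite derive_coord.
have -> : sinsum x = \sum_(j < d) (fun t : 'rV[R]_d => sqsin (x ord0 j) (t ord0 j)).
  by apply/funext => t; rewrite /sinsum fct_sumE.
split; first by apply: differentiable_sum => j; case: (term j).
rewrite derive_sum; last by move=> j; apply: diff_derivable; case: (term j).
by apply: eq_bigr => j _; case: (term j).
Qed.

Lemma derive_cone (R : realType) d (A e : R) (x w v : 'rV[R]_d) : 0 < e ->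
  differentiable (cone A e x) w /\
  'D_v (cone A e x) w = A * (2 * Num.sqrt (e ^+ 2 + sinsum x w))^-1 *
     \sum_(j < d) sqsin' (x ord0 j) (w ord0 j) * v ord0 j.
Proof.
move=> e0; have [dS DS] := derive_sinsum x w v.
have dT : differentiable (fun t => e ^+ 2 + sinsum x t) w.
  by apply: differentiableD.
have DT : 'D_v (fun t => e ^+ 2 + sinsum x t) w = 'D_v (sinsum x) w.
  have -> : (fun t => e ^+ 2 + sinsum x t) = cst (e ^+ 2) + sinsum x by apply/funext.
  by rewrite deriveD ?derive_cst ?add0r //; exact: diff_derivable.
have Tpos : 0 < e ^+ 2 + sinsum x w.
  by apply: ltr_pwDl; [exact: exprn_gt0|exact: sinsum_ge0].
have douter := is_deriveZ A (is_derive1_sqrt Tpos).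
by have := derive_comp_real v dT douter; rewrite DT DS.
Qed.

Lemma grad_cone (R : realType) d (A e : R) (x w : 'rV[R]_d) : 0 < e ->
  grad (cone A e x) w = \row_i (A * (2 * Num.sqrt (e ^+ 2 + sinsum x w))^-1 *
                                sqsin' (x ord0 i) (w ord0 i)).
Proof.
move=> e0; apply/rowP => i; rewrite !mxE.
have [_ ->] := derive_cone A x w (delta_mx 0 i) e0.
congr (_ * _); rewrite (bigD1 i) //= big1 ?addr0; first by rewrite mxE eqxx mulr1.
by move=> j ji; rewrite mxE (negbTE ji) andbF mulr0.
Qed.

Lemma row_continuous (R : realType) d (T : topologicalType) (f : 'I_d -> T -> R) :
  (forall i, continuous (f i)) -> continuous (fun t => \row_i f i t).
Proof.
move=> fc t A /= [P hP sPA].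
have : \forall s \near t, forall (i : 'I_1) (j : 'I_d), P i j (f j s).
  apply: filter_forall => i; apply: filter_forall => j.
  by apply: (fc j t); have := hP i j; rewrite mxE.
by apply: filterS => s Hs; apply: sPA => i j /=; rewrite mxE; exact: Hs.
Qed.

Lemma continuous_sqsin' (R : realType) d (x : 'rV[R]_d) (i : 'I_d) :
  continuous (fun t : 'rV[R]_d => sqsin' (x ord0 i) (t ord0 i)).
Proof.
move=> w; rewrite /sqsin'.
pose h t : R := pi * (t - x ord0 i).
have hc : continuous h.
  move=> s; apply: (@continuousM _ _ (fun=> pi) (fun t => t - x ord0 i)).
    exact: cst_continuous.
  apply: (@continuousD _ _ _ id (fun=> - x ord0 i)); first exact: cvg_id.
  exact: cst_continuous.
have coord_c : continuous (fun t : 'rV[R]_d => t ord0 i) by move=> s; exact: coord_continuous.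
have ac : continuous (fun t : 'rV[R]_d => h (t ord0 i)) by move=> s; exact: (continuous_comp (coord_c s) (hc _)).
apply: (@continuousM _ _ (fun t : 'rV[R]_d => 2 * sin (h (t ord0 i)) * cos (h (t ord0 i))) (fun=> pi)).
  apply: (@continuousM _ _ (fun t : 'rV[R]_d => 2 * sin (h (t ord0 i))) (fun t : 'rV[R]_d => cos (h (t ord0 i)))).
    apply: (@continuousM _ _ (fun=> 2) (fun t : 'rV[R]_d => sin (h (t ord0 i)))).
      exact: cst_continuous.
    exact: (continuous_comp (ac w) (@continuous_sin R _)).
  exact: (continuous_comp (ac w) (@continuous_cos R _)).
exact: cst_continuous.
Qed.

Lemma cone_C1 (R : realType) d (A e : R) (x : 'rV[R]_d) : 0 < e ->
  C1_torus (cone A e x).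
Proof.
move=> e0; split; [|split].
- by move=> w z; rewrite /cone sinsum_periodic.
- by move=> w; case: (derive_cone A x w 0 e0).
have -> : grad (cone A e x) = fun w => \row_i
    (A * (2 * Num.sqrt (e ^+ 2 + sinsum x w))^-1 * sqsin' (x ord0 i) (w ord0 i)).
  by apply/funext => w; exact: grad_cone.
apply: row_continuous => i w.
have Tpos : 0 < e ^+ 2 + sinsum x w.
  by apply: ltr_pwDl; [exact: exprn_gt0|exact: sinsum_ge0].
have Tc : {for w, continuous (fun t => e ^+ 2 + sinsum x t)}.
  apply: continuousD; first exact: cst_continuous.
  by apply: differentiable_continuous; case: (derive_sinsum x w 0).
pose g t := 2 * Num.sqrt (e ^+ 2 + sinsum x t).
apply: (@continuousM _ _ (fun t => A * (g t)^-1) (fun t => sqsin' (x ord0 i) (t ord0 i))).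
  apply: (@continuousM _ _ (fun=> A) (fun t => (g t)^-1)); first exact: cst_continuous.
  apply: continuousV; first by rewrite mulf_neq0 // gt_eqF // sqrtr_gt0.
  apply: (@continuousM _ _ (fun=> 2) (fun t => Num.sqrt (e ^+ 2 + sinsum x t))).
    exact: cst_continuous.
  exact: (continuous_comp Tc (@sqrt_continuous R _)).
exact: continuous_sqsin'.
Qed.

Lemma periodic_max (R : realType) d (F : 'rV[R]_d -> R) (x : 'rV[R]_d) :
  continuous F -> Defs.periodic F ->
  exists2 w0 : 'rV[R]_d, (forall j, `|w0 ord0 j - x ord0 j| <= 2^-1) &
     forall w, F w <= F w0.
Proof.
move=> Fc Fp.
pose cell := [set w : 'rV[R]_d |
  forall j, `[x ord0 j - 2^-1, x ord0 j + 2^-1]%classic (w ord0 j)].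
have cell_compact : compact cell.
  exact: (@rV_compact R d (fun j => `[x ord0 j - 2^-1, x ord0 j + 2^-1]%classic)
            (fun j => @segment_compact R _ _)).
have cell0 : cell !=set0.
  exists x => j /=; rewrite in_itv /=.
  have : (0 : R) <= 2^-1 by rewrite invr_ge0 ler0n.
  by move=> h; apply/andP; split; lra.
have [c cell_c cmax] := EVT_max_rV cell0 cell_compact (continuous_subspaceT Fc).
exists c => [j|w].
  move: cell_c; rewrite inE => /(_ j); rewrite /= in_itv /= => /andP[h1 h2].
  by rewrite ler_norml; apply/andP; split; lra.
(* translate w into the cell by an integer vector *)
pose z : 'rV[int]_d := \row_j (- Num.floor (w ord0 j - x ord0 j + 2^-1)).
rewrite -(Fp w z); apply: cmax; rewrite inE => j /=.
rewrite !mxE in_itv /=.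
have := floor_itv (w ord0 j - x ord0 j + 2^-1).
set n := Num.floor _; rewrite intrD => /andP[h1 h2].
by rewrite mulrNz; apply/andP; split; lra.
Qed.

Lemma sqrt_add_le (R : rcfType) (a b : R) : 0 <= a -> 0 <= b ->
  Num.sqrt (a + b) <= Num.sqrt a + Num.sqrt b.
Proof.
move=> a0 b0; have sa := sqrtr_ge0 a; have sb := sqrtr_ge0 b.
rewrite -[X in _ <= X]ger0_norm ?addr_ge0 // -sqrtr_sqr ler_sqrt ?sqr_ge0 //.
by rewrite -{1}(sqr_sqrtr a0) -{1}(sqr_sqrtr b0); nra.
Qed.

Lemma enormN (R : realType) d (x y : 'rV[R]_d) : enorm (y - x) = enorm (x - y).
Proof.
by rewrite /enorm; congr Num.sqrt; apply: eq_bigr => j _; rewrite !mxE -sqrrN opprB.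
Qed.

Lemma sinsum_xx (R : realType) d (x : 'rV[R]_d) : sinsum x x = 0.
Proof. by apply: big1 => j _; rewrite /sqsin subrr mulr0 sin0 expr0n. Qed.

Lemma sqsin_le_sinsum (R : realType) d (x w : 'rV[R]_d) (j : 'I_d) :
  sqsin (x ord0 j) (w ord0 j) <= sinsum x w.
Proof.
rewrite /sinsum (bigD1 j) //= lerDl.
by apply: sumr_ge0 => i _; exact: sqr_ge0.
Qed.

Lemma sinsum_le (R : realType) d (x w : 'rV[R]_d) :
  sinsum x w <= pi ^+ 2 * \sum_(j < d) (w ord0 j - x ord0 j) ^+ 2.
Proof.
rewrite mulr_sumr; apply: ler_sum => j _; rewrite /sqsin -exprMn.
rewrite -[X in X <= _]ger0_norm ?sqr_ge0 // -[X in _ <= X]ger0_norm ?sqr_ge0 //.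
by rewrite !normrX lerXn2r ?nnegrE ?normr_ge0 // norm_sin_le.
Qed.

Lemma cone_le (R : realType) d (A e : R) (x w : 'rV[R]_d) : 0 <= A -> 0 <= e ->
  cone A e x w <= A * (e + pi * enorm (w - x)).
Proof.
move=> A0 e0; apply: ler_wpM2l => //.
apply: le_trans (sqrt_add_le (sqr_ge0 e) (sinsum_ge0 x w)) _.
rewrite sqrtr_sqr ger0_norm // lerD2l /enorm.
under [X in _ <= _ * Num.sqrt X]eq_bigr do rewrite !mxE.
rewrite -[X in _ <= X * _]ger0_norm ?pi_ge0 // -sqrtr_sqr -sqrtrM ?sqr_ge0 //.
rewrite ler_sqrt; last by apply: mulr_ge0; [exact: sqr_ge0|apply: sumr_ge0 => j _; exact: sqr_ge0].
exact: sinsum_le.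
Qed.

(* On the half-period |t| <= 1/2, smallness of sin (pi t) forces smallness of
   t; this follows from the continuity of asin at 0. *)
Lemma small_sin_small_arg (R : realType) (delta : R) : 0 < delta ->
  exists2 delta' : R, 0 < delta' & forall t : R,
    `|t| <= 2^-1 -> `|sin (pi * t)| < delta' -> `|t| < delta.
Proof.
move=> delta0.
have asin0 : asin (0 : R) = 0.
  by rewrite -{1}sin0 sinK // in_itv /= oppr_le0 divr_ge0 ?pi_ge0 ?ler0n.
have : -1 < (0 : R) < 1 by rewrite ltrN10 ltr01.
move/continuous_asin/cvgrPdist_lt/(_ (pi * delta) (mulr_gt0 (@pi_gt0 R) delta0)).
rewrite asin0 => /nbhs_ballP[r r0 near_asin].
exists r => // t t12 sin_small.
have pi0 := @pi_gt0 R.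
have := near_asin (sin (pi * t)); rewrite /ball /= !sub0r !normrN => /(_ sin_small).
rewrite sinK; first by rewrite normrM gtr0_norm // ltr_pM2l.
move: t12; rewrite ler_norml in_itv /= => /andP[h1 h2].
by apply/andP; split; nra.
Qed.

(* Where sinsum <= 1/4 every cosine factor satisfies cos^2 >= 3/4, so the
   gradient of the cone is bounded below in terms of sinsum:
   |D cone|^2 (e^2 + sinsum) >= (A pi)^2 sinsum / 2. *)
Lemma grad_cone_lb (R : realType) d (A e : R) (x w : 'rV[R]_d) :
  0 < e -> sinsum x w <= 4^-1 ->
  (A * pi) ^+ 2 / 2 * sinsum x w <=
    (e ^+ 2 + sinsum x w) * enorm (grad (cone A e x) w) ^+ 2.
Proof.
move=> e0 S14.
set g := Num.sqrt (e ^+ 2 + sinsum x w).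
have g0 : 0 < g by rewrite sqrtr_gt0 ltr_pwDl ?exprn_gt0 ?sinsum_ge0.
have gsq : g ^+ 2 = e ^+ 2 + sinsum x w by rewrite sqr_sqrtr ?addr_ge0 ?sqr_ge0 ?sinsum_ge0.
have -> : enorm (grad (cone A e x) w) ^+ 2 = \sum_(j < d) grad (cone A e x) w ord0 j ^+ 2.
  by rewrite /enorm sqr_sqrtr //; apply: sumr_ge0 => j _; exact: sqr_ge0.
rewrite -gsq grad_cone // big_distrr /sinsum big_distrr; apply: ler_sum => j _ /=.
rewrite !mxE /sqsin /sqsin' -/g.
set s := sin _; set c := cos _.
have s14 : s ^+ 2 <= 4^-1 := le_trans (sqsin_le_sinsum x w j) S14.
have cs : c ^+ 2 = 1 - s ^+ 2 by rewrite /c /s cos2sin2.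
have -> : g ^+ 2 * (A * (2 * g)^-1 * (2 * s * c * pi)) ^+ 2 = (A * pi) ^+ 2 * (s ^+ 2 * c ^+ 2).
  by field; rewrite gt_eqF.
rewrite -mulrA ler_wpM2l ?sqr_ge0 //; nra.
Qed.

Definition visc_sub_eikonal (R : realType) d (u : 'rV[R]_d -> R) (K : R) :=
  forall (phi : 'rV[R]_d -> R) (x0 : 'rV[R]_d), C1_torus phi ->
    (\forall y \near x0, u y - phi y <= u x0 - phi x0) -> enorm (grad phi x0) <= K.

(* Key estimate: if the slope A dominates both K and the oscillation 2B of u,
   then every maximiser w0 of u - cone A e x satisfies sinsum x w0 <= e^2.
   Comparing with the value at x first gives sinsum x w0 <= 1/4; then the
   gradient bound at w0 and [grad_cone_lb] force sinsum x w0 <= e^2. *)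
Lemma cone_max_near (R : realType) d (u : 'rV[R]_d -> R) (K B A e : R)
    (x w0 : 'rV[R]_d) :
  (forall w, `|u w| <= B) -> visc_sub_eikonal u K ->
  K <= A -> 8 * B + 1 <= A -> 0 < e -> e <= 4^-1 ->
  (forall w, u w - cone A e x w <= u w0 - cone A e x w0) ->
  sinsum x w0 <= e ^+ 2.
Proof.
move=> ub u_eik KA BA e0 e14 w0max.
have B0 : 0 <= B := le_trans (normr_ge0 _) (ub x).
have A0 : 0 < A by lra.
set S0 := sinsum x w0.
have S0ge : 0 <= S0 := sinsum_ge0 x w0.
set g := Num.sqrt (e ^+ 2 + S0).
have gsq : g ^+ 2 = e ^+ 2 + S0 by rewrite sqr_sqrtr // addr_ge0 // sqr_ge0.
have g_ge0 : 0 <= g := sqrtr_ge0 _.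
have grad_le : enorm (grad (cone A e x) w0) <= K.
  by apply: u_eik; [exact: cone_C1|apply: filterE => y; exact: w0max].
have S014 : S0 <= 4^-1.
  have conex : cone A e x x = A * e.
    by rewrite /cone sinsum_xx addr0 sqrtr_sqr ger0_norm // ltW.
  have := w0max x; rewrite conex => hx.
  have := ub x; have := ub w0; rewrite !ler_norml => /andP[b1 b2] /andP[b3 b4].
  have osc : A * (g - e) <= 2 * B by rewrite /cone -/S0 -/g in hx; lra.
  have ge : g - e <= 4^-1 by nra.
  by nra.
have lb := grad_cone_lb A e0 S014; rewrite -/S0 in lb.
have n_ge0 : 0 <= enorm (grad (cone A e x) w0) := sqrtr_ge0 _.
have ub_grad : (e ^+ 2 + S0) * enorm (grad (cone A e x) w0) ^+ 2 <= A ^+ 2 * (e ^+ 2 + S0).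
  by rewrite mulrC ler_wpM2r ?addr_ge0 ?sqr_ge0 // lerXn2r ?nnegrE //; lra.
have pi2 : 4 <= pi ^+ 2 :> R by have := @pi_ge2 R; nra.
have : 2 * A ^+ 2 * S0 <= A ^+ 2 * (e ^+ 2 + S0).
  apply: le_trans ub_grad; apply: le_trans lb; rewrite exprMn.
  by apply: ler_wpM2r => //; nra.
rewrite mulrDr => h; rewrite -(ler_pM2l (exprn_gt0 2 A0)); lra.
Qed.


(* A continuous periodic bounded viscosity subsolution of |Du| <= K is
   Lipschitz with constant (K + 8B + 1) pi: compare u with the cone of that
   slope with vertex x; the maximiser of u - cone is e-close to x by
   [cone_max_near], and letting e -> 0 gives u w <= u x + A pi |w - x|. *)
Lemma eikonal_lipschitz (R : realType) d (u : 'rV[R]_d -> R) (K B : R) :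
  0 <= K -> (forall w, `|u w| <= B) -> visc_sub_eikonal u K ->
  continuous u -> Defs.periodic u ->
  forall x w, u w - u x <= (K + 8 * B + 1) * pi * enorm (w - x).
Proof.
move=> K0 ub u_eik uc up x w.
have B0 : 0 <= B := le_trans (normr_ge0 _) (ub x).
set A := K + 8 * B + 1.
have A0 : 0 < A by rewrite /A; lra.
apply/ler_addgt0Pr => eta eta0.
have [delta delta0 u_near] : exists2 delta : R, 0 < delta & forall y : 'rV[R]_d,
    (forall j, `|y ord0 j - x ord0 j| < delta) -> `|u x - u y| < eta.
  move/cvgrPdist_lt: (uc x) => /(_ eta eta0) /nbhs_ballP [delta delta0 ball_u].
  exists delta => // y y_near; apply: ball_u.
  by rewrite /ball /=; split => // i j; rewrite ord1 /ball /= distrC; exact: y_near.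
have [delta' delta'0 sin_small] := small_sin_small_arg delta0.
pose e := Num.min (4^-1) (delta' / 2).
have e0 : 0 < e by rewrite lt_min invr_gt0 ltr0n divr_gt0.
have e14 : e <= 4^-1 by rewrite ge_min lexx.
have e_lt : e < delta' by rewrite gt_min orbC ltr_pdivrMr // ltr_pMr // ltr1n.
pose F y := u y - cone A e x y.
have Fc : continuous F.
  move=> y; apply: (@continuousD _ _ _ u (fun t => - cone A e x t)); first exact: uc.
  apply: continuousN; apply: differentiable_continuous.
  by have [_ []] := cone_C1 A x e0.
have Fp : Defs.periodic F by move=> y z; rewrite /F up /cone sinsum_periodic.
have [w0 w0_cell w0max] := periodic_max x Fc Fp.
have KA : K <= A by rewrite /A; lra.
have BA : 8 * B + 1 <= A by rewrite /A; lra.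
have S0e := cone_max_near ub u_eik KA BA e0 e14 w0max.
have uw0 : u w0 < u x + eta.
  have : `|u x - u w0| < eta.
    apply: u_near => j; apply: sin_small => //.
    have sq : sin (pi * (w0 ord0 j - x ord0 j)) ^+ 2 <= e ^+ 2.
      exact: le_trans (sqsin_le_sinsum x w0 j) S0e.
    apply: le_lt_trans e_lt.
    by rewrite ler_norml; apply/andP; split; nra.
  by rewrite distrC ltr_norml => /andP[_]; lra.
have cone_w0 : A * e <= cone A e x w0.
  apply: ler_wpM2l; first exact: ltW.
  rewrite -{1}(ger0_norm (ltW e0)) -sqrtr_sqr.
  by apply: ler_wsqrtr; rewrite lerDl sinsum_ge0.
have := w0max w; have := cone_le x w (ltW A0) (ltW e0); rewrite /F; lra.
Qed.

(* A set squeezed between ]a, a+1[ and [a, a+1] differs from the open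
   interval by at most the two endpoints: it is measurable, of measure <= 1. *)
Lemma measurable_between_itv (R : realType) (a : R) (I : set R) :
  `]a, a + 1[ `<=` I -> I `<=` `[a, a + 1] ->
  measurable I /\ (lebesgue_measure I <= 1)%E.
Proof.
move=> oI Ic.
have endpoint (b : R) : measurable (I `&` [set b]).
  have [Ib|nIb] := pselect (I b).
    have -> : I `&` [set b] = [set b] by apply/seteqP; split => [y []//|y /= ->].
    exact: measurable_set1.
  have -> : I `&` [set b] = set0 by apply/seteqP; split => // y [Iy /= yb]; rewrite -yb in nIb.
  exact: measurable0.
have mI : measurable I.
  have -> : I = [set` `]a, a + 1[] `|` (I `&` [set a]) `|` (I `&` [set a + 1]).
    apply/seteqP; split => [y Iy|y [[/oI //|[] //]|[] //]].
    have := Ic y Iy; rewrite /= in_itv /= !le_eqVlt => /andP[/predU1P[ay|ay] /predU1P[ya|ya]].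
    - by right; split => //; rewrite -ya.
    - by left; right; split => //; rewrite -ay.
    - by right; split => //; rewrite -ya.
    - by left; left; rewrite /= in_itv /= ay ya.
  by apply: measurableU; [apply: measurableU|]; [exact: measurable_itv| |].
split => //; apply: (@le_trans _ _ (lebesgue_measure [set` `[a, a + 1]])).
  by apply: le_measure; rewrite ?inE //; exact: measurable_itv.
by rewrite lebesgue_measure_itv /= lte_fin ltrDl ltr01 -EFinD addrAC subrr add0r.
Qed.

Lemma measurable_kernel_section (R : realType) (I : set R) (k : R -> R -> R) (xi : R) :
  measurable I -> measurable_fun (I `*` I) (fun z : R * R => k z.1 z.2) -> I xi ->
  measurable_fun I (k xi).
Proof.
move=> mI mk Ixi.
apply: (@measurable_comp _ _ _ _ _ _ (I `*` I) (fun z : R * R => k z.1 z.2) I (pair xi)).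
- exact: measurableX.
- by move=> _ [y Iy <-]; split.
- exact: mk.
- exact: (measurable_funS measurableT).
Qed.

(* Lower bound on the nonlocal term: with 0 <= k <= k1, |v| <= C and
   |I| <= 1, each integrand is >= -2 k1 C.  The integral is split into its
   positive and negative parts, which needs no integrability assumption. *)
Lemma coupling_ge (R : realType) d (I : set R) (k : R -> R -> R) (k1 C : R)
    (v : 'rV[R]_d -> R -> R) (x : 'rV[R]_d) (xi : R) :
  measurable I -> (lebesgue_measure I <= 1)%E ->
  measurable_fun (I `*` I) (fun z : R * R => k z.1 z.2) ->
  (forall xi eta, I xi -> I eta -> 0 <= k xi eta <= k1) ->
  measurable_fun I (v x) -> I xi ->
  (forall eta, I eta -> - C <= v x eta <= C) ->
  ((- (2 * k1 * C))%:E <= coupling I k v x xi)%E.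
Proof.
move=> mI muI mk kb mv Ixi vb.
have [C0 k10] : 0 <= C /\ 0 <= k1.
  by have := vb xi Ixi; have := kb xi xi Ixi Ixi => /andP[? ?] /andP[? ?]; split; lra.
have c0 : (0 <= (2 * k1 * C)%:E)%E by rewrite lee_fin !mulr_ge0.
pose f eta := (k xi eta * (v x xi - v x eta))%:E.
have mf : measurable_fun I f.
  apply/measurable_EFinP; apply: measurable_funM.
    exact: measurable_kernel_section.
  by apply: measurable_funB => //; exact: measurable_cst.
have f_lb eta : I eta -> (f^\- eta <= (2 * k1 * C)%:E)%E.
  move=> Ieta; rewrite funenegE /= /f ge_max c0 andbT lee_fin.
  have := vb eta Ieta; have := vb xi Ixi; have := kb xi eta Ixi Ieta.
  by move=> /andP[? ?] /andP[? ?] /andP[? ?]; nra.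
have pos : (0 <= \int[lebesgue_measure]_(eta in I) f^\+ eta)%E.
  by apply: integral_ge0 => eta _; exact: funepos_ge0.
have neg : (\int[lebesgue_measure]_(eta in I) f^\- eta <= (2 * k1 * C)%:E)%E.
  have le_cst : (\int[lebesgue_measure]_(eta in I) f^\- eta <=
                 \int[lebesgue_measure]_(eta in I) (cst (2 * k1 * C)%:E) eta)%E.
    exact: (ge0_le_integral lebesgue_measure mI (fun eta _ => funeneg_ge0 f eta)
              (measurable_funeneg mf) (measurable_cst _) f_lb).
  apply: le_trans le_cst _.
  by rewrite integral_cst // -[X in (_ <= X)%E]mule1 lee_wpmul2l.
by rewrite /coupling integralE EFinN -[X in (X <= _)%E]sub0e leeB.
Qed.

Lemma le_of_powR_le (R : realType) (r m Q : R) : 1 < m -> r `^ m <= Q -> r <= 1 + Q.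
Proof.
move=> m1 rmQ; have [r1|r1] := leP r 1.
  by have := powR_ge0 r m; lra.
by have := le1r_powR (ltW r1) (ltW m1); lra.
Qed.

(* Under the coercivity (B1), a bounded viscosity subsolution of (DP) is, in
   each fibre xi, a viscosity subsolution of |Du| <= K with K uniform in xi:
   at a touching point, C1 |Dphi|^m - C2 <= H <= 2 k1 Bd - alpha v. *)
Lemma subsol_eikonal (R : realType) d (I : set R) (k : R -> R -> R) (k1 : R)
    (H : 'rV[R]_d -> 'rV[R]_d -> R -> R) (alpha Bd : R) (v : 'rV[R]_d -> R -> R) :
  measurable I -> (lebesgue_measure I <= 1)%E ->
  measurable_fun (I `*` I) (fun z : R * R => k z.1 z.2) ->
  (forall xi eta, I xi -> I eta -> 0 <= k xi eta <= k1) -> 0 <= k1 ->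
  B1 I H -> 0 < alpha -> 0 <= Bd ->
  visc_sub I k H alpha v -> (forall x, measurable_fun I (v x)) ->
  (forall x xi, I xi -> - Bd <= v x xi <= Bd) ->
  exists2 K : R, 0 <= K & forall xi, I xi -> visc_sub_eikonal (fun x => v x xi) K.
Proof.
move=> mI muI mk kb k10 [C1 [C2 [m [C10 [C20 [m1 coercive]]]]]] alpha0 Bd0 vsub mv vb.
set Q := (C2 + alpha * Bd + 2 * k1 * Bd) / C1.
have Q0 : 0 <= Q.
  have := mulr_ge0 (ltW alpha0) Bd0; have := mulr_ge0 (mulr_ge0 (ler0n _ 2) k10) Bd0.
  by move=> ? ?; rewrite divr_ge0 ?ltW //; lra.
exists (1 + Q); first lra.
move=> xi Ixi phi x0 phiC touch.
set p := grad phi x0.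
have sub := vsub xi phi x0 Ixi phiC touch.
have coup := coupling_ge mI muI mk kb (mv x0) Ixi (vb x0).
have HB : alpha * v x0 xi + H x0 p xi - 2 * k1 * Bd <= 0.
  rewrite -lee_fin; apply: le_trans sub.
  by rewrite EFinB; apply: leeD => //; rewrite EFinN.
have vlow : alpha * (- Bd) <= alpha * v x0 xi.
  by apply: ler_wpM2l; [exact: ltW|have /andP[] := vb x0 xi Ixi].
apply: (@le_of_powR_le R (enorm p) m Q m1).
rewrite /Q ler_pdivlMr // mulrC; have := coercive x0 p xi Ixi; lra.
Qed.

Theorem mainTheorem5 (R : realType) (d : nat) (a : R) (I : set R)
    (k : R -> R -> R) (k0 k1 : R) (H : 'rV[R]_d -> 'rV[R]_d -> R -> R) :
  `]a, a + 1[ `<=` I -> I `<=` `[a, a + 1] ->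
  measurable_fun (I `*` I) (fun z : R * R => k z.1 z.2) ->
  0 < k0 -> (forall xi eta, I xi -> I eta -> k0 <= k xi eta <= k1) ->
  hamiltonian_class I H -> B1 I H -> B2 I H ->
  forall (alpha : R) (v : 'rV[R]_d -> R -> R), 0 < alpha ->
    visc_sol I k H alpha v ->
    (forall x xi, I xi -> - (Msup I H / alpha) <= v x xi <= Msup I H / alpha) ->
    exists L : R, 0 < L /\
      forall (x y : 'rV[R]_d) (xi : R), I xi ->
        `|v x xi - v y xi| <= L * enorm (x - y).
Proof.
move=> oI Ic mk k00 kb _ coercive _ alpha v alpha0 [[vc [vm vp]] [vsub _]] vb.
have [mI muI] := measurable_between_itv oI Ic.
set Bd := Msup I H / alpha in vb *.
have Imid : I (a + 2^-1).
  apply: oI; rewrite /= in_itv /= ltrDl invr_gt0 ltr0n ltrD2l.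
  by rewrite invf_lt1 ?ltr0n ?ltr1n.
have Bd0 : 0 <= Bd by have /andP[] := vb 0 _ Imid; lra.
have kpos xi eta : I xi -> I eta -> 0 <= k xi eta <= k1.
  by move=> Ixi Ieta; have /andP[? ?] := kb xi eta Ixi Ieta; apply/andP; split; lra.
have k10 : 0 <= k1 by have /andP[? ?] := kb _ _ Imid Imid; lra.
have [K K0 eik] := subsol_eikonal mI muI mk kpos k10 coercive alpha0 Bd0 vsub vm vb.
exists ((K + 8 * Bd + 1) * pi); split; first by rewrite mulr_gt0 ?pi_gt0 //; lra.
move=> x y xi Ixi.
have vbound w : `|v w xi| <= Bd by rewrite ler_norml vb.
have lip := eikonal_lipschitz K0 vbound (eik xi Ixi) (vc xi Ixi) (vp xi).
by have := lip y x; have := lip x y; rewrite enormN ler_norml; lra.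
Qed.
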